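(* Let $n\ge2$. (i) Let $P$ be an invertible $n\times n$ matrix over $\mathbb{F}_{q^2}$, $A=P(E_{11}+\cdots+E_{n-1,n-1})P^\ast$, and $\mathbf{x}=P(y_1,\ldots,y_n)^\top$ with $y_n\neq 0$, so that $\mathcal{L}=\{A+\lambda\mathbf{x}\mathbf{x}^\ast: 0\neq\lambda\in\mathbb{F}_q\}$ is a leaf of $A$. Put $\mathbf{z}:=\big(-y_1/y_n,\ldots,-y_{n-1}/y_n\big)^\top$. Then for every nonzero $\lambda\in\mathbb{F}_q$, $$(A+\lambda\mathbf{x}\mathbf{x}^\ast)^{-1}=(P^{-1})^\ast\begin{bmatrix}I_{n-1}&\mathbf{z}\\ \mathbf{z}^\ast&\mathbf{z}^\ast\mathbf{z}+(\lambda y_n\bar y_n)^{-1}\end{bmatrix}P^{-1}.$$ If moreover $q\ge 3$, then $\mathcal{L}^{-1}:=\{(A+\lambda\mathbf{x}\mathbf{x}^\ast)^{-1}: 0\neq\lambda\in\mathbb{F}_q\}$ is the leaf of the matrix $N=(P^{-1})^\ast\begin{bmatrix}I_{n-1}&\mathbf{z}\\ \mathbf{z}^\ast&\mathbf{z}^\ast\mathbf{z}\end{bmatrix}P^{-1}$ generated by the vector $\mathbf{v}=(P^{-1})^\ast\mathbf{e}_n$, i.e. $\mathcal{L}^{-1}=\{N+\mu\mathbf{v}\mathbf{v}^\ast: 0\ne\mu\in\mathbb{F}_q\}$, where $\mathbf{e}_n=(0,\ldots,0,1)^\top$. (ii) Let $D$ be an invertible $(n-1)\times(n-1)$ hermitian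 matrix, $\mathbf{w}\in\mathbb{F}_{q^2}^{n-1}$ and $\mu\in\mathbb{F}_q$. Then $\begin{bmatrix}\mu&\mathbf{w}^\ast\\ \mathbf{w}&D\end{bmatrix}$ is invertible if and only if $\mu\neq\mathbf{w}^\ast D^{-1}\mathbf{w}$, in which case $$\begin{bmatrix}\mu&\mathbf{w}^\ast\\ \mathbf{w}&D\end{bmatrix}^{-1}=\begin{bmatrix}0&0\\0&D^{-1}\end{bmatrix}+\frac{1}{\mu-\mathbf{w}^\ast D^{-1}\mathbf{w}}\begin{bmatrix}-1\\ D^{-1}\mathbf{w}\end{bmatrix}\begin{bmatrix}-1\\ D^{-1}\mathbf{w}\end{bmatrix}^\ast.$$
   Context: $\mathbb{F}_{q^2}$ is the field with $q^2$ elements with involution $\bar x=x^q$, fixed field $\mathbb{F}_q$; $X^\ast=\bar X^\top$; hermitian means $A^\ast=A$. $E_{ii}$ is the matrix unit with $1$ in position $(i,i)$. Leaf: if $A$ is an $n\times n$ hermitian matrix of rank $s<n$ and $\mathbf{x}$ is not in the column space of $A$, then $\{A+\lambda\mathbf{x}\mathbf{x}^\ast: 0\ne\lambda\in\mathbb{F}_q\}$ is the leaf of $A$ generated by $\mathbf{x}$. *)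

From HB Require Import structures.
From mathcomp Require Import all_boot all_order all_algebra.
Set Implicit Arguments. Unset Strict Implicit. Unset Printing Implicit Defensive.
Import Order.TTheory GRing.Theory.
Local Open Scope ring_scope.

Section Herm.
Variables (F : finFieldType) (q : nat).

(* the involution x |-> x^q of F_{q^2} (when #|F| = q^2) *)
Definition hconj (x : F) : F := x ^+ q.

Definition inFq (x : F) : bool := x ^+ q == x.

Definition ctr m n (X : 'M[F]_(m, n)) : 'M[F]_(n, m) := (map_mx hconj X)^T.

Definition is_hermitian n (A : 'M[F]_n) : bool := ctr A == A.

Definition leaf_set n (A : 'M[F]_n) (x : 'cV[F]_n) : {set 'M[F]_n} :=
  [set A + l *: (x *m ctr x) | l : F & (l != 0) && inFq l].

Definition is_leaf n (A : 'M[F]_n) (x : 'cV[F]_n) (L : {set 'M[F]_n}) : Prop :=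
  [/\ is_hermitian A, (\rank A < n)%N, ~~ (x^T <= A^T)%MS & L = leaf_set A x].

End Herm.

From HB Require Import structures.
From mathcomp Require Import all_boot all_order all_algebra.
From mathcomp Require Import finfield ring.
Import Order.TTheory GRing.Theory.
Set Implicit Arguments.
Unset Strict Implicit.
Unset Printing Implicit Defensive.
Local Open Scope ring_scope.

(* Since #|F| = q^2 is a power of the characteristic, x |-> x^q is a field
   automorphism of order two, so X |-> X^* is an involution reversing products.
   Part (ii) is the Schur complement factorisation
   [mu w^*; w D] = [1 w^*D^-1; 0 1] [mu - w^*D^-1 w 0; w D].
   For part (i), x = yn P b with b = (-z, 1), so A + l x x^* = P T P^* where
   T = diag(I, 0) + a b b^* and a = l yn yn^q; the block matrix
   [I z; z^* z^*z + a^-1] inverts T, hence the inverses are N + a^-1 v v^*,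
   and l |-> (l yn yn^q)^-1 permutes F_q^*.  Both A and N are of the form
   P C C^* P^* with C of width n - 1, hence rank deficient, and the generators
   are P y and Q e_n, Q = (P^-1)^* , with y and e_n outside the column space of
   the respective C. *)

Lemma mulmx1_invmx (R : comUnitRingType) n (M K : 'M[R]_n) :
  M *m K = 1%:M -> invmx M = K.
Proof.
move=> MK; have [uM _] := mulmx1_unit MK.
by rewrite -[LHS]mulmx1 -MK mulKmx.
Qed.

Section BlockInverse.
Variables (R : fieldType) (m : nat).

Lemma unitmx_block_schur (mu : R) (r : 'rV[R]_m) (c : 'cV[R]_m) (D : 'M[R]_m) :
  D \in unitmx ->
  (block_mx mu%:M r c D \in unitmx) = (mu != (r *m invmx D *m c) ord0 ord0).
Proof.
move=> uD; set s := (r *m invmx D *m c) ord0 ord0.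
have -> : block_mx mu%:M r c D
        = block_mx 1%:M (r *m invmx D) 0 1%:M *m block_mx (mu - s)%:M 0 c D.
  rewrite mulmx_block !mul1mx !mul0mx !add0r mulmxKV // [_ *m c]mx11_scalar.
  by rewrite -raddfD /= subrK.
rewrite unitmxE det_mulmx det_ublock det_lblock !det1 det_scalar1 !mul1r.
have dD : \det D != 0 by rewrite -unitfE -unitmxE.
by rewrite unitfE mulf_eq0 negb_or dD andbT subr_eq0.
Qed.

Lemma invmx_block_schur (mu : R) (r : 'rV[R]_m) (c : 'cV[R]_m) (D : 'M[R]_m) :
  let s := (r *m invmx D *m c) ord0 ord0 in
  D \in unitmx -> mu != s ->
  invmx (block_mx mu%:M r c D)
  = block_mx 0 0 0 (invmx D)
    + (mu - s)^-1 *: (col_mx (-1)%:M (invmx D *m c) *m row_mx (-1)%:M (r *m invmx D)).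
Proof.
move=> s uD mus; apply: mulmx1_invmx.
have hs : r *m invmx D *m c = s%:M by apply: mx11_scalar.
have ms : mu - s != 0 by rewrite subr_eq0.
rewrite mul_col_row scale_block_mx add_block_mx mulmx_block (scalar_mx_block 1 m).
rewrite !add0r !mul_mx_scalar !mul_scalar_mx !scaleN1r !mulmxDr -!scalemxAr.
rewrite !mulmxN !mul_mx_scalar !scaleN1r !opprK !mulmxA mulmxV // !mul1mx hs.
rewrite !mul_scalar_mx -!scalemxAl.
set rD := r *m invmx D; set cr := c *m r *m invmx D.
by congr block_mx; apply/matrixP => i j; rewrite !mxE;
  (try case: (i == j)); rewrite ?mulr1n ?mulr0n; field.
Qed.

Lemma mulmx_rank_one_update (z : 'cV[R]_m) (z' : 'rV[R]_m) (a : R) : a != 0 ->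
  (block_mx 1%:M 0 0 (0 : 'M_1)
     + a *: (col_mx (- z) 1%:M *m row_mx (- z') 1%:M))
  *m block_mx 1%:M z z' (z' *m z + a^-1%:M) = 1%:M.
Proof.
move=> a0.
rewrite mul_col_row scale_block_mx add_block_mx mulmx_block (scalar_mx_block m 1).
rewrite !mulmxDl !mulmxDr ?mulmx1 ?mul1mx ?mul0mx ?addr0 ?add0r.
rewrite -!scalemxAl ?mulNmx ?mulmxN ?mul1mx ?mul_mx_scalar !mulmxA ?mulNmx ?opprK.
set zz := z *m z'; set zsz := z' *m z; set zzz := z *m z' *m z.
by congr block_mx; apply/matrixP => i j; rewrite !mxE;
  (try case: (i == j)); rewrite ?mulr1n ?mulr0n; field.
Qed.

End BlockInverse.

Lemma tr_col_mx_sub_graph (R : fieldType) k l (e1 : 'cV[R]_k) (e2 : 'cV[R]_l)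
    (c : 'M[R]_(l, k)) :
  ((col_mx e1 e2)^T <= (col_mx 1%:M c)^T)%MS -> e2 = c *m e1.
Proof.
case/submxP=> D; rewrite !tr_col_mx tr_scalar_mx mul_mx_row mulmx1.
by case/eq_row_mx=> <- /(congr1 trmx); rewrite trmxK trmx_mul !trmxK.
Qed.

Lemma pnat_pchar_card (F : finFieldType) : [pchar F].-nat #|F|.
Proof.
have [p _ pF] := finPcharP F.
rewrite [#|F|](card_pprimeChar pF) (eq_pnat _ (pcharf_eq pF)) pnatX pnat_id //.
exact: pcharf_prime pF.
Qed.

Section Hermitian.
Variables (F : finFieldType) (q : nat).
Hypothesis hF : #|F| = (q ^ 2)%N.
Local Notation ct := (ctr q).

Lemma pnat_pchar_q : [pchar F].-nat q.
Proof. by have := pnat_pchar_card F; rewrite hF pnatX orbF. Qed.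

Lemma hconjD (a b : F) : hconj q (a + b) = hconj q a + hconj q b.
Proof. by rewrite /hconj exprDn_pchar // pnat_pchar_q. Qed.

Lemma hconjB (a b : F) : hconj q (a - b) = hconj q a - hconj q b.
Proof. by rewrite -[in RHS](subrK b a) [in RHS]hconjD addrK. Qed.

Lemma hconj_is_monoid_morphism : monoid_morphism (@hconj F q).
Proof. by split=> [|a b]; rewrite /hconj ?expr1n ?exprMn. Qed.

HB.instance Definition _ := GRing.isZmodMorphism.Build F F (hconj q) hconjB.
HB.instance Definition _ :=
  GRing.isMonoidMorphism.Build F F (hconj q) hconj_is_monoid_morphism.

Lemma hconjK : involutive (@hconj F q).
Proof. by move=> a; rewrite /hconj -exprM mulnn -hF expf_card. Qed.

Lemma inFqM (a b : F) : inFq q a -> inFq q b -> inFq q (a * b).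
Proof. by rewrite /inFq exprMn => /eqP -> /eqP ->. Qed.

Lemma inFqV (a : F) : inFq q a -> inFq q a^-1.
Proof. by rewrite /inFq exprVn => /eqP ->. Qed.

Lemma inFq_norm (a : F) : inFq q (a * hconj q a).
Proof. by apply/eqP; rewrite exprMn -/(hconj q _) -/(hconj q _) hconjK mulrC. Qed.

Lemma ctrM m n p (A : 'M[F]_(m, n)) (B : 'M[F]_(n, p)) : ct (A *m B) = ct B *m ct A.
Proof. by rewrite /ctr map_mxM trmx_mul. Qed.

Lemma ctrK m n (A : 'M[F]_(m, n)) : ct (ct A) = A.
Proof. by apply/matrixP => i j; rewrite !mxE hconjK. Qed.

Lemma ctrN m n (A : 'M[F]_(m, n)) : ct (- A) = - ct A.
Proof. by rewrite /ctr map_mxN linearN. Qed.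

Lemma ctrZ m n a (A : 'M[F]_(m, n)) : ct (a *: A) = hconj q a *: ct A.
Proof. by rewrite /ctr map_mxZ linearZ. Qed.

Lemma ctr0 m n : ct (0 : 'M[F]_(m, n)) = 0.
Proof. by rewrite /ctr map_mx0 trmx0. Qed.

Lemma ctr_scalar n a : ct (a%:M : 'M[F]_n) = (hconj q a)%:M.
Proof. by rewrite /ctr map_scalar_mx tr_scalar_mx. Qed.

Lemma ctr1 n : ct (1%:M : 'M[F]_n) = 1%:M.
Proof. by rewrite ctr_scalar rmorph1. Qed.

Lemma ctr_col m1 m2 n (a : 'M[F]_(m1, n)) (b : 'M[F]_(m2, n)) :
  ct (col_mx a b) = row_mx (ct a) (ct b).
Proof. by rewrite /ctr map_col_mx tr_col_mx. Qed.

Lemma ctr_inv n (A : 'M[F]_n) : ct (invmx A) = invmx (ct A).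
Proof. by rewrite /ctr map_invmx trmx_inv. Qed.

Lemma unitmx_ctr n (A : 'M[F]_n) : (ct A \in unitmx) = (A \in unitmx).
Proof. by rewrite /ctr unitmx_tr map_unitmx. Qed.

Lemma is_hermitian_congr n (P B : 'M[F]_n) :
  ct B = B -> is_hermitian q (P *m B *m ct P).
Proof. by move=> hB; apply/eqP; rewrite !ctrM ctrK hB mulmxA. Qed.

Lemma invmx_congr n (P T K : 'M[F]_n) : P \in unitmx -> T *m K = 1%:M ->
  P *m T *m ct P \in unitmx /\
  invmx (P *m T *m ct P) = ct (invmx P) *m K *m invmx P.
Proof.
move=> uP TK.
have PTK : P *m T *m ct P *m (ct (invmx P) *m K *m invmx P) = 1%:M.
  rewrite -!mulmxA [ct P *m _]mulmxA -ctrM mulVmx // ctr1 mul1mx.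
  by rewrite [T *m _]mulmxA TK mul1mx mulmxV.
by split; [case: (mulmx1_unit PTK) | apply: mulmx1_invmx].
Qed.

Lemma is_leaf_congr n k (P : 'M[F]_n) (C : 'M[F]_(n, k)) (e : 'cV[F]_n) :
  (k < n)%N -> P \in unitmx -> ~~ (e^T <= C^T)%MS ->
  let A := P *m (C *m ct C) *m ct P in
  is_leaf q A (P *m e) (leaf_set q A (P *m e)).
Proof.
move=> kn uP eC A; split=> //.
- by apply: is_hermitian_congr; rewrite ctrM ctrK.
- apply: leq_ltn_trans kn; rewrite (leq_trans (mxrankM_maxl _ _)) //.
  rewrite (leq_trans (mxrankM_maxr _ _)) //.
  by rewrite (leq_trans (mxrankM_maxl _ _)) ?rank_leq_col.
- have fP : row_free P^T by rewrite row_free_unit unitmx_tr.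
  apply: contra eC; rewrite /A !trmx_mul !mulmxA submxMfree //.
  by move/submx_trans; apply; rewrite submxMl.
Qed.

Lemma leaf_set_reparam n (A N : 'M[F]_n) (x v : 'cV[F]_n) (f : 'M[F]_n -> 'M[F]_n)
    (c : F) :
  c != 0 -> inFq q c ->
  (forall l, l != 0 -> inFq q l ->
     f (A + l *: (x *m ct x)) = N + (l * c)^-1 *: (v *m ct v)) ->
  f @: leaf_set q A x = leaf_set q N v.
Proof.
move=> c0 cq hf; apply/setP => X; apply/imsetP/imsetP.
- case=> B /imsetP [l]; rewrite inE => /andP [l0 lq] -> ->.
  exists (l * c)^-1; last exact: hf.
  by rewrite inE invr_eq0 mulf_neq0 //= inFqV // inFqM.
- case=> mu; rewrite inE => /andP [mu0 muq] ->.
  have l0 : (mu * c)^-1 != 0 by rewrite invr_eq0 mulf_neq0.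
  have lq : inFq q (mu * c)^-1 by rewrite inFqV // inFqM.
  exists (A + (mu * c)^-1 *: (x *m ct x)).
    by apply/imsetP; exists (mu * c)^-1; rewrite // inE l0.
  by rewrite hf // invfM invrK mulfK.
Qed.

Lemma invmx_hermitian_bordered m (D : 'M[F]_m) (w : 'cV[F]_m) (mu : F) :
  D \in unitmx -> is_hermitian q D ->
  let s := (ct w *m invmx D *m w) ord0 ord0 in
  mu != s ->
  let u := col_mx ((-1)%:M : 'M[F]_1) (invmx D *m w) in
  invmx (block_mx mu%:M (ct w) w D)
  = block_mx 0 0 0 (invmx D) + (mu - s)^-1 *: (u *m ct u).
Proof.
move=> uD /eqP hD s mus u; rewrite invmx_block_schur //.
by rewrite /u ctr_col ctrM ctr_inv hD ctr_scalar (rmorphN1 (hconj q)).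
Qed.

Section LeafInverse.
Variables (m : nat) (P : 'M[F]_(m + 1)) (y : 'cV[F]_(m + 1)).
Hypotheses (uP : P \in unitmx) (yn0 : y (rshift m ord0) ord0 != 0).

Local Notation yn := (y (rshift m ord0) ord0).
Local Notation z := (\col_(i < m) (- (y (lshift 1 i) ord0 / yn))).
Local Notation b := (col_mx (- z) (1%:M : 'M[F]_1)).
Local Notation S := (block_mx (1%:M : 'M[F]_m) 0 0 (0 : 'M[F]_1)).
Local Notation A := (P *m S *m ct P).
Local Notation x := (P *m y).
Local Notation N := (ct (invmx P) *m block_mx (1%:M : 'M[F]_m) z (ct z) (ct z *m z)
                     *m invmx P).
Local Notation v := (ct (invmx P) *m col_mx (0 : 'cV[F]_m) (1 : 'cV[F]_1)).

Lemma y_scale : y = yn *: b.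
Proof.
rewrite -[y in LHS]vsubmxK scale_col_mx; congr col_mx.
  by apply/matrixP => i j; rewrite !mxE (ord1 j); field.
by apply/matrixP => i j; rewrite !mxE (ord1 i) (ord1 j) mulr1.
Qed.

Lemma leaf_update l :
  A + l *: (x *m ct x) = P *m (S + (l * yn * hconj q yn) *: (b *m ct b)) *m ct P.
Proof.
rewrite [in P *m y]y_scale ctrM ctrZ mulmxDr mulmxDl; congr (_ + _).
rewrite -!scalemxAl -!scalemxAr -!scalemxAl !scalerA !mulmxA.
by congr (_ *: _); ring.
Qed.

Lemma invmx_leaf l : l != 0 ->
  A + l *: (x *m ct x) \in unitmx /\
  invmx (A + l *: (x *m ct x))
  = ct (invmx P) *m block_mx 1%:M z (ct z) (ct z *m z + (l * yn * hconj q yn)^-1%:M)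
    *m invmx P.
Proof.
move=> l0; rewrite leaf_update; apply: invmx_congr => //.
have -> : ct b = row_mx (- ct z) 1%:M by rewrite ctr_col ctrN ctr1.
by apply: mulmx_rank_one_update; rewrite !mulf_neq0 ?fmorph_eq0.
Qed.

Lemma invmx_leaf_eq l : l != 0 ->
  invmx (A + l *: (x *m ct x)) = N + (l * yn * hconj q yn)^-1 *: (v *m ct v).
Proof.
move=> l0; have [_ ->] := invmx_leaf l0.
rewrite ctrM ctrK !mulmxA scalemxAl -(mulmxA _ (col_mx 0 1)) scalemxAr.
rewrite -mulmxDl -mulmxDr; congr (_ *m _ *m _).
rewrite ctr_col ctr0 mul_col_row scale_block_mx add_block_mx.
by rewrite !mulmx0 !mul0mx !scaler0 !addr0 mul1mx [ct 1]ctr1 scalemx1.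
Qed.

Lemma is_leaf_A : is_leaf q A x (leaf_set q A x).
Proof.
have -> : S = col_mx 1%:M 0 *m ct (col_mx (1%:M : 'M[F]_m) (0 : 'M_(1, m))).
  by rewrite ctr_col ctr1 ctr0 mul_col_row !mul1mx !mul0mx.
apply: is_leaf_congr => //; first by rewrite addn1.
apply/negP; rewrite -[y]vsubmxK => /tr_col_mx_sub_graph /matrixP /(_ 0 0).
by rewrite mul0mx !mxE; apply/eqP.
Qed.

Lemma is_leaf_inverse : is_leaf q N v [set invmx B | B in leaf_set q A x].
Proof.
have -> : [set invmx B | B in leaf_set q A x] = leaf_set q N v.
  apply: (leaf_set_reparam (f := invmx) (c := yn * hconj q yn)).
  - by rewrite mulf_neq0 ?fmorph_eq0.
  - exact: inFq_norm.
  - by move=> l l0 _; rewrite invmx_leaf_eq // mulrA.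
have -> : block_mx (1%:M : 'M[F]_m) z (ct z) (ct z *m z)
          = col_mx 1%:M (ct z) *m ct (col_mx 1%:M (ct z)).
  by rewrite ctr_col ctr1 ctrK mul_col_row !mul1mx mulmx1.
rewrite -[in X in _ *m X](ctrK (invmx P)).
apply: is_leaf_congr; [by rewrite addn1 | by rewrite unitmx_ctr unitmx_inv |].
apply/negP => /tr_col_mx_sub_graph /eqP; rewrite mulmx0.
exact/negP/oner_neq0.
Qed.

End LeafInverse.

End Hermitian.

Theorem lemma3p1 (F : finFieldType) (q m : nat) (hF : #|F| = (q ^ 2)%N)
  (hm : (1 <= m)%N) :
  (* part (i) *)
  (forall (P : 'M[F]_(m + 1)) (y : 'cV[F]_(m + 1)),
     P \in unitmx -> y (rshift m ord0) ord0 != 0 ->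
     let yn := y (rshift m ord0) ord0 in
     let A := P *m block_mx (1%:M : 'M[F]_m) 0 0 (0 : 'M[F]_1) *m ctr q P in
     let x := P *m y in
     let z : 'cV[F]_m := \col_(i < m) (- (y (lshift 1 i) ord0 / yn)) in
     let L := leaf_set q A x in
     is_leaf q A x L /\
     (forall l : F, l != 0 -> inFq q l ->
        A + l *: (x *m ctr q x) \in unitmx /\
        invmx (A + l *: (x *m ctr q x)) =
          ctr q (invmx P)
          *m block_mx (1%:M : 'M[F]_m) z (ctr q z)
                      (ctr q z *m z + ((l * yn * hconj q yn)^-1)%:M)
          *m invmx P) /\
     ((3 <= q)%N ->
        let N := ctr q (invmx P)
                 *m block_mx (1%:M : 'M[F]_m) z (ctr q z) (ctr q z *m z)
                 *m invmx P in
        let v := ctr q (invmx P) *m col_mx (0 : 'cV[F]_m) (1 : 'cV[F]_1) in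
        is_leaf q N v [set invmx B | B in L])) /\
  (* part (ii) *)
  (forall (D : 'M[F]_m) (w : 'cV[F]_m) (mu : F),
     D \in unitmx -> is_hermitian q D -> inFq q mu ->
     let M := block_mx (mu%:M : 'M[F]_1) (ctr q w) w D in
     let s := (ctr q w *m invmx D *m w) ord0 ord0 in
     (M \in unitmx = (mu != s)) /\
     (mu != s ->
        let u := col_mx ((-1)%:M : 'M[F]_1) (invmx D *m w) in
        invmx M = block_mx (0 : 'M[F]_1) 0 0 (invmx D)
                  + (mu - s)^-1 *: (u *m ctr q u))).
Proof.
split=> [P y uP yn0 yn A x z L | D w mu uD hD _ M s].
- split; first exact: (is_leaf_A hF).
  split; first by move=> l l0 _; exact: (invmx_leaf hF).
  by move=> _ N v; exact: (is_leaf_inverse hF).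
- split; first exact: unitmx_block_schur.
  by move=> mus u; exact: (invmx_hermitian_bordered hF).
Qed.
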